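(* Let $p\ge1$, $h,w,s$ positive integers with $s\le h$, $X\in\mathbb{R}^{h\times w}$ nonzero, $0<B\le wh^2$, $\delta\in(0,1/4)$, and $x_{\min}=\min_{|X_{i,j}|>0}|X_{i,j}|^p$. Let $0\le r\le l$ with $l-r\le \delta x_{\min}/(wh^2)$. Let $\Omega_l$ be an $l$-optimal support with $\mathrm{EMD}[\Omega_l]\le B$ and $\Omega_r$ an $r$-optimal support with $\mathrm{EMD}[\Omega_r]\ge B$. Let $d=\lfloor \mathrm{EMD}[\Omega_r]/B\rfloor$ and let $\Omega_r'$ be any support with $\Phi[\Omega_r']\ge\Phi[\Omega_r]/(2(d+1))$. Then, with $\mathrm{OPT}=\max_{\Omega\in\mathbb{M}_{k,B}}\Phi[\Omega]$, $$\max\{\Phi[\Omega_r'],\Phi[\Omega_l]\}\ \ge\ \left(\tfrac14-\delta\right)\mathrm{OPT}.$$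
   Context: A support is a set $\Omega\subseteq[h]\times[w]$, with columns $\Omega_j=\{i:(i,j)\in\Omega\}$; $\Phi[\Omega]=\sum_{(i,j)\in\Omega}|X_{i,j}|^p$. For finite $A,B\subset\mathbb{N}$ with $|A|=|B|$, $\mathrm{EMD}(A,B)=\min_\pi\sum_{a\in A}|a-\pi(a)|$ over bijections $\pi:A\to B$; if every column has $s$ elements, $\mathrm{EMD}[\Omega]=\sum_{j=1}^{w-1}\mathrm{EMD}(\Omega_j,\Omega_{j+1})$. $\mathcal{S}_s$ is the set of supports with $|\Omega_j|=s$ for all $j$, and $\mathbb{M}_{k,B}=\{\Omega\in\mathcal{S}_s:\mathrm{EMD}[\Omega]\le B\}$ where $k=sw$. For $\lambda\ge0$, a support $\Omega$ is $\lambda$-optimal if $\Omega\in\mathcal{S}_s$ and it maximizes $\Phi[\Omega]-\lambda\,\mathrm{EMD}[\Omega]$ over $\mathcal{S}_s$ (equivalently, it is the support of an integral min-cost max-flow in the EMD flow network with node costs $-|X_{i,j}|^p$, edge costs $\lambda|i_1-i_2|$ between consecutive columns, unit capacities, and supply/demand $s$). *)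

From Stdlib Require Import Reals.
From mathcomp Require Import all_boot all_fingroup.
Set Implicit Arguments.
#[local] Open Scope R_scope. Unset Strict Implicit. Unset Printing Implicit Defensive.

(* |x|^p for x >= 0 and real p >= 1, with 0^p = 0 (Stdlib's Rpower 0 p = 1). *)
Definition powp (x p : R) : R :=
  if Rle_dec x 0 then R0 else Rpower x p.

Definition nzR (x : R) : bool := if Req_EM_T x 0 then false else true.

Definition supp (h w : nat) := {set 'I_h * 'I_w}.

Definition col (h w : nat) (Om : supp h w) (j : nat) : {set 'I_h} :=
  [set i | [exists jj : 'I_w, (nat_of_ord jj == j) && ((i, jj) \in Om)]].

Definition distn (a b : nat) : nat := addn (subn a b) (subn b a).

(* EMD(A,B) = min over bijections pi : A -> B of sum_{a in A} |a - pi a|.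
   Bijections A -> B are exactly the restrictions of permutations sigma of
   'I_h with sigma @: A = B.  (Default h*h is never attained when |A| = |B|,
   since every matching cost is <= h*h.) *)
Definition emd (h : nat) (A B : {set 'I_h}) : nat :=
  \big[minn/(muln h h)]_(sg : {perm 'I_h} | sg @: A == B)
     \big[addn/0%N]_(a in A) distn a (sg a).

Definition EMD (h w : nat) (Om : supp h w) : nat :=
  \big[addn/0%N]_(0 <= j < w.-1) emd (col Om j) (col Om j.+1).

Definition Phi (h w : nat) (p : R) (X : 'I_h -> 'I_w -> R) (Om : supp h w) : R :=
  \big[Rplus/R0]_(ij in Om) powp (Rabs (X ij.1 ij.2)) p.

Definition inS (h w s : nat) (Om : supp h w) : Prop :=
  forall j : 'I_w, #|col Om j| = s.

(* Omega \in M_{k,B} with k = s w *)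
Definition inM (h w s : nat) (B : R) (Om : supp h w) : Prop :=
  inS s Om /\ Rle (INR (EMD Om)) B.

Definition inMb (h w s : nat) (B : R) (Om : supp h w) : bool :=
  [forall j : 'I_w, #|col Om j| == s] && (if Rle_dec (INR (EMD Om)) B then true else false).

Definition lam_opt (h w s : nat) (p : R) (X : 'I_h -> 'I_w -> R) (lam : R)
  (Om : supp h w) : Prop :=
  inS s Om /\
  forall Om' : supp h w, inS s Om' ->
    Rle (Rminus (Phi p X Om') (Rmult lam (INR (EMD Om')))) (Rminus (Phi p X Om) (Rmult lam (INR (EMD Om)))).

(* OPT = max_{Omega in M_{k,B}} Phi[Omega]  (Phi >= 0, so default 0 is harmless
   when M_{k,B} is nonempty, which holds under the hypotheses) *)
Definition OPT (h w s : nat) (p : R) (X : 'I_h -> 'I_w -> R) (B : R) : R :=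
  \big[Rmax/R0]_(Om : supp h w | inMb s B Om) Phi p X Om.

(* x_min = min over nonzero entries of |X_{i,j}|^p (default: the max entry,
   irrelevant when X is nonzero) *)
Definition xmin (h w : nat) (p : R) (X : 'I_h -> 'I_w -> R) : R :=
  \big[Rmin/(\big[Rmax/R0]_(ij : 'I_h * 'I_w) powp (Rabs (X ij.1 ij.2)) p)]_(ij : 'I_h * 'I_w | nzR (X ij.1 ij.2))
     powp (Rabs (X ij.1 ij.2)) p.

(* Let Ω be a support attaining OPT.  Comparing the l-optimal Ω_l with Ω gives
   Φ[Ω_l] >= OPT - l B.  If that is below (1/4 - δ) OPT then l B > (3/4 + δ) OPT;
   as l - r is so small that (l - r) B <= δ x_min <= δ OPT, also r B > 3/4 OPT.
   Comparing the r-optimal Ω_r with Ω then gives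
   Φ[Ω_r] >= OPT + r (EMD[Ω_r] - B) >= OPT + (d - 1) r B >= (3d + 1)/4 OPT,
   and dividing by 2(d + 1) leaves at least OPT/4 since d >= 1. *)

From Stdlib Require Import Reals Lra.
From mathcomp Require Import all_boot all_fingroup.
Set Implicit Arguments.
#[local] Open Scope R_scope.

Lemma powp_ge0 x p : 0 <= powp x p.
Proof.
by rewrite /powp; case: Rle_dec => [x_le0 | x_gt0] /=; [lra | left; apply: exp_pos].
Qed.

Lemma Phi_ge0 h w p (X : 'I_h -> 'I_w -> R) Om : 0 <= Phi p X Om.
Proof.
apply: (big_ind (fun x => 0 <= x)) => [|x y|ij _]; [lra|lra|exact: powp_ge0].
Qed.

Lemma bigRmin_le {T : finType} (P : pred T) (F : T -> R) x0 i0 :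
  P i0 -> \big[Rmin/x0]_(i | P i) F i <= F i0.
Proof.
move=> Pi0; have : i0 \in index_enum T by exact: mem_index_enum.
elim: (index_enum T) => [|i e IHe] //; rewrite big_cons inE.
case/orP => [/eqP <-|i0_e]; first by rewrite Pi0; exact: Rmin_l.
case: (P i); last exact: IHe.
by apply: Rle_trans (IHe i0_e); apply: Rmin_r.
Qed.

Lemma bigRmax_eq0_or_attained {T : finType} (P : pred T) (F : T -> R) :
  \big[Rmax/R0]_(i | P i) F i = 0 \/
  exists2 i, P i & \big[Rmax/R0]_(i | P i) F i = F i.
Proof.
apply: (big_ind (fun x => x = 0 \/ exists2 i, P i & x = F i)) => [|x y|i Pi];
  [by left| |by right; exists i].
by rewrite /Rmax; case: Rle_dec.
Qed.

Lemma Phi_eq0_or_ge_xmin h w p (X : 'I_h -> 'I_w -> R) Om :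
  Phi p X Om = 0 \/ xmin p X <= Phi p X Om.
Proof.
suff [] : 0 <= Phi p X Om /\ (Phi p X Om = 0 \/ xmin p X <= Phi p X Om) by [].
apply: (big_ind (fun x => 0 <= x /\ (x = 0 \/ xmin p X <= x))).
- by split; [lra | left].
- move=> x y [x0 Hx] [y0 Hy]; split; first lra.
  by case: Hx => Hx; case: Hy => Hy; [left|right|right|right]; lra.
- move=> ij _; split; first exact: powp_ge0.
  case nzX: (nzR (X ij.1 ij.2)).
    by right; rewrite /xmin; apply: (bigRmin_le (fun ij : _ * _ => nzR (X ij.1 ij.2))).
  move: nzX; rewrite /nzR; case: Req_EM_T => [X0 _ | //]; rewrite X0.
  by left; rewrite Rabs_R0 /powp; case: Rle_dec => [_ | ?] /=; lra.
Qed.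

Lemma OPT_eq0_or_attained h w s p (X : 'I_h -> 'I_w -> R) B :
  OPT s p X B = 0 \/
  exists2 Om, inM s B Om & OPT s p X B = Phi p X Om.
Proof.
rewrite /OPT; case: (bigRmax_eq0_or_attained (inMb s B) (Phi p X)) => [|[Om]]; first by left.
case/andP => /forallP cols EMD_le ->; right; exists Om => //; split.
  by move=> j; apply/eqP.
by move: EMD_le; case: Rle_dec.
Qed.

Lemma lam_opt_ge h w s p (X : 'I_h -> 'I_w -> R) lam B Om Om' :
  0 <= lam -> lam_opt s p X lam Om -> inM s B Om' ->
  Phi p X Om' + lam * (INR (EMD Om) - B) <= Phi p X Om.
Proof.
move=> lam0 [_ opt] [/opt Om'_le EMD_le].
have : lam * INR (EMD Om') <= lam * B by apply: Rmult_le_compat_l.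
lra.
Qed.

Lemma Rle_div_r {a b c : R} : 0 < c -> (a <= b / c <-> a * c <= b).
Proof.
move=> c0; split => H.
  have bc : b / c * c = b by field; lra.
  by rewrite -[X in _ <= X]bc; apply: Rmult_le_compat_r; lra.
apply: (Rmult_le_reg_r c) => //; rewrite /Rdiv Rmult_assoc Rinv_l; lra.
Qed.

Lemma INR_ge1 n : 0 < INR n -> 1 <= INR n.
Proof. case: n => [|n] /=; first lra; rewrite -/(INR n.+1) S_INR; have := pos_INR n; lra. Qed.

Lemma bicriteria_bound (O Pl Pr Pr' l r B Er delta d : R) :
  0 <= O -> 0 < delta -> 0 < B -> 0 <= r -> 1 <= d -> d * B <= Er ->
  (l - r) * B <= delta * O ->
  O - l * B <= Pl -> O + r * (Er - B) <= Pr ->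
  Pr / (2 * (d + 1)) <= Pr' ->
  (1 / 4 - delta) * O <= Rmax Pr' Pl.
Proof.
move=> O0 delta0 B0 r0 d1 dB gap Hl Hr Hr'.
case: (Rle_dec ((1 / 4 - delta) * O) Pl) => [|Pl_small].
  by move/Rle_trans; apply; apply: Rmax_r.
apply: Rle_trans (Rmax_l _ _); apply: Rle_trans Hr'.
have rB : 3 / 4 * O <= r * B by lra.
have Pr_big : (3 * d + 1) / 4 * O <= Pr.
  have : (d - 1) * (3 / 4 * O) <= (d - 1) * (r * B).
    by apply: Rmult_le_compat_l; lra.
  have : r * (d * B) <= r * Er by apply: Rmult_le_compat_l.
  lra.
have dO : 0 <= (d - 1) * O by apply: Rmult_le_pos; lra.
have deltaO : 0 <= delta * O * (d + 1) by apply: Rmult_le_pos; [apply: Rmult_le_pos|]; lra.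
have d0 : 0 < 2 * (d + 1) by lra.
by apply/(Rle_div_r d0); lra.
Qed.

Theorem lemma11 (p : R) (h w s : nat) (X : 'I_h -> 'I_w -> R) (B delta l r : R)
  (Om_l Om_r Om_r' : supp h w) (d : nat) :
  (1 <= p) ->
  leq 1 h -> leq 1 w -> leq 1 s -> leq s h ->
  (exists i j, X i j <> 0) ->
  (0 < B) -> (B <= INR w * pow (INR h) 2) ->
  (0 < delta) -> (delta < 1 / 4) ->
  (0 <= r) -> (r <= l) ->
  (l - r <= delta * xmin p X / (INR w * pow (INR h) 2)) ->
  lam_opt s p X l Om_l -> (INR (EMD Om_l) <= B) ->
  lam_opt s p X r Om_r -> (B <= INR (EMD Om_r)) ->
  (INR d <= INR (EMD Om_r) / B < INR d + 1) ->
  (Phi p X Om_r' >= Phi p X Om_r / (2 * (INR d + 1))) ->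
  (Rmax (Phi p X Om_r') (Phi p X Om_l) >= (1 / 4 - delta) * OPT s p X B).
Proof.
move=> _ _ _ _ _ _ B0 BW delta0 _ r0 rl gap opt_l _ opt_r EMD_r [dlo dhi] Hr'.
apply: Rle_ge; have Pl0 := Phi_ge0 p X Om_l; have Pr'0 := Phi_ge0 p X Om_r'.
case: (OPT_eq0_or_attained s p X B) => [->|[Om inM_Om ->]].
  by apply: Rle_trans (Rmax_r _ _); lra.
case: (Phi_eq0_or_ge_xmin p X Om) => [->|xmin_le].
  by apply: Rle_trans (Rmax_r _ _); lra.
have Hl := lam_opt_ge (Rle_trans _ _ _ r0 rl) opt_l inM_Om.
have Hr := lam_opt_ge r0 opt_r inM_Om.
have lEl : 0 <= l * INR (EMD Om_l) by apply: Rmult_le_pos; [lra | apply: pos_INR].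
have W0 : 0 < INR w * INR h ^ 2 by lra.
have d1 : 1 <= INR d.
  apply: INR_ge1; suff : 1 <= INR (EMD Om_r) / B by lra.
  by apply/(Rle_div_r B0); lra.
have dB : INR d * B <= INR (EMD Om_r) by apply/(Rle_div_r B0).
have gapB : (l - r) * B <= delta * Phi p X Om.
  have : (l - r) * B <= (l - r) * (INR w * INR h ^ 2).
    by apply: Rmult_le_compat_l; lra.
  have : (l - r) * (INR w * INR h ^ 2) <= delta * xmin p X by apply/(Rle_div_r W0).
  have : delta * xmin p X <= delta * Phi p X Om by apply: Rmult_le_compat_l; lra.
  lra.
apply: (bicriteria_bound (Phi_ge0 p X Om) delta0 B0 r0 d1 dB gapB _ Hr (Rge_le _ _ Hr')).
lra.
Qed.
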